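(* Let $k\ge1$ and let $x=(X_1,\dots,X_k)$, $y=(Y_1,\dots,Y_k)$ be elements of $\mathrm M_2(\mathbb Z)^k$ such that every entry of every $X_i$ and $Y_i$ lies in $\{0,1\}$. If the reductions of $x,y$ modulo $2$ generate $\mathrm M_2(\mathbb F_2)^k$ as an $\mathbb F_2$-algebra, then $x,y$ generate $\mathrm M_2(\mathbb Z)^k$ as a ring. In particular, the ring $\mathrm M_2(\mathbb Z)^{16}$ can be generated by $2$ elements.
   Context: Generation is as unital associative algebra (ring): the non-commutative monomials in the generators (including $1$) span the algebra as a module over the base ring. *)

From HB Require Import structures.
From mathcomp Require Import all_boot all_order all_algebra.
Set Implicit Arguments. Unset Strict Implicit. Unset Printing Implicit Defensive.
Import Order.TTheory GRing.Theory Num.Theory.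
Local Open Scope ring_scope.

Definition M2Zk (k : nat) := {ffun 'I_k -> 'M[int]_2}.
Definition M2F2k (k : nat) := {ffun 'I_k -> 'M['F_2]_2}.

Definition word_eval (A : pzRingType) (w : seq A) : A := \prod_(g <- w) g.

Definition ring_generates (A : pzRingType) (gens : seq A) : Prop :=
  forall a : A, exists l : seq (int * seq A),
    (forall p, p \in l -> {subset p.2 <= gens}) /\
    a = \sum_(p <- l) (word_eval p.2 *~ p.1).

Definition F2alg_generates (k : nat) (gens : seq (M2F2k k)) : Prop :=
  forall a : M2F2k k, exists l : seq ('F_2 * seq (M2F2k k)),
    (forall p, p \in l -> {subset p.2 <= gens}) /\
    a = \sum_(p <- l) (p.1 *: word_eval p.2).

Definition red2 (k : nat) (x : M2Zk k) : M2F2k k :=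
  [ffun i => map_mx (fun z : int => (z%:~R : 'F_2)) (x i)].

Definition entries01 (k : nat) (x : M2Zk k) : Prop :=
  forall (i : 'I_k) (r c : 'I_2), x i r c = 0 \/ x i r c = 1.

From HB Require Import structures.
From mathcomp Require Import all_boot all_order all_algebra ring.
Import Order.TTheory GRing.Theory Num.Theory.
Set Implicit Arguments. Unset Strict Implicit. Unset Printing Implicit Defensive.
Local Open Scope ring_scope.

(* Write S for the subring generated by x and y. All that matters about a component of the
   pair is its 0/1 pattern, one of 256, and every fact about single patterns is decided by
   computation.

   If a pair (X, Y) generates M_2(F_2), the 4 x 4 determinant of the entries of 1, X, Y, XY
   equals det (XY - YX), which is odd, hence +-1 for 0/1 matrices: so 1, X, Y, XY is a Z-basis
   of M_2(Z) and S maps onto every factor. Two factors i <> j cannot carry GL_2(F_2)-conjugate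
   generating pairs: conjugation would then relate the i-th and j-th components of everything
   generated mod 2, including the element that is 1 in factor i and 0 in factor j. For
   traceless 2 x 2 matrices u v + v u = tr (u v), so [a,b][c,d] + [c,d][a,b] is central, and
   its value in each factor is an integer trace invariant of the pattern; nine such invariants
   tell apart non-conjugate generating patterns by values differing by +-1, which produces an
   element of S equal to 1 in factor i and 0 in factor j. A subring of a finite product which
   maps onto every factor and separates any two factors in this way is the whole product. *)

Section RingSpan.
Variables (A : pzRingType) (gens : seq A).

Definition ring_span (a : A) : Prop :=
  exists l : seq (int * seq A),
    (forall p, p \in l -> {subset p.2 <= gens}) /\
    a = \sum_(p <- l) (word_eval p.2 *~ p.1).

Lemma ring_span_word (w : seq A) : {subset w <= gens} -> ring_span (word_eval w).
Proof.
move=> sw; exists [:: (1, w)]; split; first by move=> p; rewrite inE => /eqP ->.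
by rewrite big_seq1.
Qed.

Lemma ring_span_gen g : g \in gens -> ring_span g.
Proof.
move=> gg; have := @ring_span_word [:: g]; rewrite /word_eval big_seq1; apply.
by move=> h; rewrite inE => /eqP ->.
Qed.

Lemma ring_span0 : ring_span 0.
Proof. by exists [::]; rewrite big_nil. Qed.

Lemma ring_spanD a b : ring_span a -> ring_span b -> ring_span (a + b).
Proof.
move=> [l1 [s1 ->]] [l2 [s2 ->]]; exists (l1 ++ l2); split; last by rewrite big_cat.
by move=> p; rewrite mem_cat => /orP [/s1|/s2].
Qed.

Lemma ring_spanMz a z : ring_span a -> ring_span (a *~ z).
Proof.
move=> [l [sl ->]]; exists [seq (p.1 * z, p.2) | p <- l]; split.
  by move=> _ /mapP [p lp ->]; exact: sl lp.
by rewrite big_map mulrz_suml; apply: eq_bigr => p _; rewrite mulrzA.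
Qed.

Lemma ring_spanM a b : ring_span a -> ring_span b -> ring_span (a * b).
Proof.
move=> [l1 [s1 ->]] [l2 [s2 ->]].
exists [seq (p.1 * q.1, p.2 ++ q.2) | p <- l1, q <- l2]; split.
  move=> _ /allpairsP [[p q] [lp lq ->]] g /=.
  by rewrite mem_cat => /orP [/(s1 _ lp)|/(s2 _ lq)].
rewrite big_allpairs_dep mulr_suml; apply: eq_bigr => p _.
rewrite mulr_sumr; apply: eq_bigr => q _ /=.
by rewrite /word_eval big_cat mulrzAl mulrzAr -mulrzA mulrC.
Qed.

Lemma ring_span1 : ring_span 1.
Proof. by have := @ring_span_word [::]; rewrite /word_eval big_nil; apply. Qed.

Lemma ring_span_int (z : int) : ring_span z%:~R.
Proof. exact: ring_spanMz ring_span1. Qed.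

Lemma ring_spanB a b : ring_span a -> ring_span b -> ring_span (a - b).
Proof. by move=> sa sb; rewrite -mulrN1z; apply/ring_spanD/ring_spanMz. Qed.

End RingSpan.

Section ProductRing.
Variables (I : finType) (A : pzRingType) (S : {ffun I -> A} -> Prop).
Hypotheses (S0 : S 0) (S1 : S 1) (SD : forall u v, S u -> S v -> S (u + v))
           (SM : forall u v, S u -> S v -> S (u * v)).
Hypothesis S_onto : forall i a, exists2 v, S v & v i = a.
Hypothesis S_sep : forall i j, i != j -> exists2 v, S v & v i = 1 /\ v j = 0.

Lemma separating_element i (J : seq I) :
  i \notin J -> exists2 w, S w & w i = 1 /\ {in J, forall j, w j = 0}.
Proof.
elim: J => [|j J IH]; first by exists 1; rewrite ?ffunE.
rewrite inE negb_or => /andP [ij /IH [w Sw [wi wJ]]].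
have [v Sv [vi vj]] := S_sep ij.
exists (v * w); first exact: SM.
split=> [|l]; first by rewrite ffunE vi wi mulr1.
by rewrite inE ffunE => /orP [/eqP ->|/wJ ->]; rewrite ?vj ?mul0r ?mulr0.
Qed.

Lemma ffun_subsemiring_full a : S a.
Proof.
have S_single i : exists2 v, S v & forall l, v l = if l == i then a i else 0.
  have [|w Sw [wi wJ]] := @separating_element i [seq j <- enum I | j != i].
    by rewrite mem_filter eqxx.
  have [u Su ui] := S_onto i (a i).
  exists (w * u); first exact: SM.
  move=> l; rewrite ffunE; have [->|li] := eqVneq l i; first by rewrite wi ui mul1r.
  by rewrite wJ ?mul0r // mem_filter li mem_enum.
suff [v Sv va] : exists2 v, S v & forall l, v l = if l \in enum I then a l else 0.
  by have -> : a = v by apply/ffunP => l; rewrite va mem_enum.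
elim: (enum I) => [|i J [v Sv va]]; first by exists 0; rewrite // => l; rewrite ffunE.
have [iJ|iJ] := boolP (i \in J).
  by exists v => // l; rewrite va inE; case: eqP => // ->; rewrite iJ orbT.
have [u Su ua] := S_single i; exists (v + u); first exact: SD.
move=> l; rewrite ffunE va ua inE; case: eqVneq => [->|_]; last by rewrite addr0.
by rewrite (negbTE iJ) add0r.
Qed.
End ProductRing.

Section ProductComponents.
Variables (I : finType) (A : pzRingType).

Lemma ffun_word_eval (s : seq {ffun I -> A}) i :
  word_eval s i = word_eval [seq g i | g : {ffun I -> A} <- s].
Proof. by rewrite /word_eval; elim: s => [|g s IH]; rewrite ?big_nil ?big_cons ffunE ?IH. Qed.

Lemma ffun_intr (z : int) i : (z%:~R : {ffun I -> A}) i = z%:~R.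
Proof. by rewrite ffunMzE ffunE. Qed.

End ProductComponents.

Section F2Generation.
Variables (k : nat) (gens : seq (M2F2k k)).
Hypothesis gen : F2alg_generates gens.

Lemma F2alg_generates_ind (P : M2F2k k -> Prop) :
  P 0 -> P 1 -> (forall a b, P a -> P b -> P (a + b)) -> (forall c a, P a -> P (c *: a)) ->
  (forall g a, g \in gens -> P a -> P (g * a)) ->
  forall a, P a.
Proof.
move=> P0 P1 PD PZ PM a; have [l [sl ->]] := gen a.
rewrite big_seq; elim/big_ind: _ => // p /sl {sl}; rewrite /word_eval => sp; apply: PZ.
elim: p.2 sp => [|g w IH] sw; first by rewrite big_nil.
rewrite big_cons; apply: PM; first by apply: sw; rewrite mem_head.
by apply: IH => h hw; apply: sw; rewrite inE hw orbT.
Qed.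

Lemma F2alg_generates_no_twist (g h : 'M['F_2]_2) (i j : 'I_k) :
  g * h = 1 -> h * g = 1 -> (forall a, a \in gens -> g * a i * h = a j) -> i = j.
Proof.
move=> gh hg twist.
pose P (m : M2F2k k) := g * m i * h = m j.
have Pall : forall a, P a.
  apply: F2alg_generates_ind; rewrite /P.
  - by rewrite !ffunE mulr0 mul0r.
  - by rewrite !ffunE mulr1.
  - by move=> a b Pa Pb; rewrite !ffunE mulrDr mulrDl Pa Pb.
  - by move=> c a Pa; rewrite !ffunE -scalerAr -scalerAl Pa.
  move=> a m ga Pm; rewrite !ffunE -(twist a ga) -Pm.
  by rewrite -!mulrA (mulrA h) hg mul1r.
have := Pall [ffun l => (l == i)%:R]; rewrite /P !ffunE eqxx mulr1 gh.
by case: eqP => // _ /eqP; rewrite oner_eq0.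
Qed.

End F2Generation.

Definition mat2 (T : Type) := (T * T * T * T)%type.

Section Mat2Ops.
Variables (T : Type) (add mul : T -> T -> T).

Definition mat2_add (u v : mat2 T) : mat2 T :=
  let: (a, b, c, d) := u in let: (a', b', c', d') := v in
  (add a a', add b b', add c c', add d d').

Definition mat2_mul (u v : mat2 T) : mat2 T :=
  let: (a, b, c, d) := u in let: (a', b', c', d') := v in
  (add (mul a a') (mul b c'), add (mul a b') (mul b d'),
   add (mul c a') (mul d c'), add (mul c b') (mul d d')).

End Mat2Ops.

Definition mat2_map (S T : Type) (f : S -> T) (u : mat2 S) : mat2 T :=
  let: (a, b, c, d) := u in (f a, f b, f c, f d).

Definition seq_of_mat2 (T : Type) (u : mat2 T) : seq T :=
  let: (a, b, c, d) := u in [:: a; b; c; d].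

Lemma mat2_map_add (S T : Type) (addS : S -> S -> S) (addT : T -> T -> T) (f : S -> T) :
  {morph f : a b / addS a b >-> addT a b} ->
  {morph mat2_map f : u v / mat2_add addS u v >-> mat2_add addT u v}.
Proof. by move=> fD [[[? ?] ?] ?] [[[? ?] ?] ?]; rewrite /= !fD. Qed.

Lemma mat2_map_mul (S T : Type) (addS mulS : S -> S -> S) (addT mulT : T -> T -> T)
    (f : S -> T) :
  {morph f : a b / addS a b >-> addT a b} -> {morph f : a b / mulS a b >-> mulT a b} ->
  {morph mat2_map f : u v / mat2_mul addS mulS u v >-> mat2_mul addT mulT u v}.
Proof. by move=> fD fM [[[? ?] ?] ?] [[[? ?] ?] ?]; rewrite /= !fD !fM. Qed.

Section Mx2.
Variable R : pzRingType.

Definition mx2 (u : mat2 R) : 'M[R]_2 :=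
  let: (a, b, c, d) := u in
  \matrix_(i, j) if i == 0 then (if j == 0 then a else b) else (if j == 0 then c else d).

Definition entries2 (M : 'M[R]_2) : mat2 R := (M 0 0, M 0 1, M 1 0, M 1 1).

Lemma mx2_entries M : mx2 (entries2 M) = M.
Proof.
apply/matrixP => i j; rewrite mxE.
by case: i => [[|[|i]] ?]; case: j => [[|[|j]] ?] //=; congr (M _ _); exact: val_inj.
Qed.

Lemma mx2_inj : injective mx2.
Proof.
move=> [[[a b] c] d] [[[a' b'] c'] d'] /matrixP E.
by have := E 0 0; have := E 0 1; have := E 1 0; have := E 1 1; rewrite !mxE /= => -> -> -> ->.
Qed.

Lemma mx2_add u v : mx2 (mat2_add +%R u v) = mx2 u + mx2 v.
Proof.
case: u => [[[? ?] ?] ?]; case: v => [[[? ?] ?] ?]; apply/matrixP => i j; rewrite !mxE.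
by case: (i == 0); case: (j == 0).
Qed.

Lemma mx2_mul u v : mx2 (mat2_mul +%R *%R u v) = mx2 u * mx2 v.
Proof.
case: u => [[[? ?] ?] ?]; case: v => [[[? ?] ?] ?]; apply/matrixP => i j.
rewrite -mulmxE !mxE !big_ord_recl big_ord0 !mxE addr0.
by case: i => [[|[|i]] ?]; case: j => [[|[|j]] ?].
Qed.

Lemma mx2_scalar (a : R) : mx2 (a, 0, 0, a) = a%:M.
Proof.
apply/matrixP => i j; rewrite !mxE.
by case: i => [[|[|i]] ?]; case: j => [[|[|j]] ?].
Qed.

Lemma mx2_trace (u : mat2 R) : \tr (mx2 u) = u.1.1.1 + u.2.
Proof. by case: u => [[[? ?] ?] ?]; rewrite /mxtrace !big_ord_recl big_ord0 !mxE addr0. Qed.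

Lemma mx2_opp (u : mat2 R) : mx2 (mat2_map -%R u) = - mx2 u.
Proof.
case: u => [[[? ?] ?] ?]; apply/matrixP => i j; rewrite !mxE.
by case: (i == 0); case: (j == 0).
Qed.

End Mx2.

Arguments mx2 {R} u : simpl never.

Lemma map_mx2 (R S : pzRingType) (f : R -> S) (u : mat2 R) :
  map_mx f (mx2 u) = mx2 (mat2_map f u).
Proof.
case: u => [[[? ?] ?] ?]; apply/matrixP => i j; rewrite !mxE.
by case: (i == 0); case: (j == 0).
Qed.

Lemma mx2_scale (z : int) u : mx2 (mat2_map ( *%R z) u) = mx2 u *~ z.
Proof.
rewrite -scaler_int; case: u => [[[? ?] ?] ?]; apply/matrixP => i j; rewrite !mxE intz.
by case: (i == 0); case: (j == 0).
Qed.

Lemma traceless_anticomm (R : comPzRingType) (u v : 'M[R]_2) :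
  \tr u = 0 -> \tr v = 0 -> u * v + v * u = (\tr (u * v))%:M.
Proof.
rewrite -(mx2_entries u) -(mx2_entries v) !mx2_trace -!mx2_mul -mx2_add -mx2_scalar mx2_trace.
rewrite /= => /eqP; rewrite addr_eq0 => /eqP -> /eqP; rewrite addr_eq0 => /eqP ->.
by apply/matrixP => i j; rewrite !mxE; case: (i == 0); case: (j == 0); ring.
Qed.

Definition comm_anticomm (A : pzRingType) (u v w z : A) :=
  (u * v - v * u) * (w * z - z * w) + (w * z - z * w) * (u * v - v * u).

Lemma ring_span_comm_anticomm (A : pzRingType) (gens : seq A) u v w z :
  ring_span gens u -> ring_span gens v -> ring_span gens w -> ring_span gens z ->
  ring_span gens (comm_anticomm u v w z).
Proof.
move=> Su Sv Sw Sz.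
have SC a b : ring_span gens a -> ring_span gens b -> ring_span gens (a * b - b * a).
  by move=> Sa Sb; apply: ring_spanB; apply: ring_spanM.
by apply: ring_spanD; apply: ring_spanM; apply: SC.
Qed.

Lemma comm_anticomm_ffunE (I : finType) (A : pzRingType) (u v w z : {ffun I -> A}) i :
  comm_anticomm u v w z i = comm_anticomm (u i) (v i) (w i) (z i).
Proof. by rewrite !ffunE. Qed.

Lemma comm_anticomm_mx2 (R : comPzRingType) (u v w z : 'M[R]_2) :
  comm_anticomm u v w z = (\tr ((u * v - v * u) * (w * z - z * w)))%:M.
Proof.
by apply: traceless_anticomm; rewrite raddfB /= mxtrace_mulC subrr.
Qed.

Definition mat2_lincomb (K T : Type) (add : T -> T -> T) (scale : K -> T -> T)
    (c : mat2 K) (b : mat2 T) : T :=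
  let: (c0, c1, c2, c3) := c in let: (b0, b1, b2, b3) := b in
  add (add (add (scale c0 b0) (scale c1 b1)) (scale c2 b2)) (scale c3 b3).

Definition zlincomb (V : zmodType) : mat2 int -> mat2 V -> V :=
  mat2_lincomb +%R (fun z (a : V) => a *~ z).

Lemma ffun_zlincomb (I : finType) (A : zmodType) c (b : mat2 {ffun I -> A}) i :
  zlincomb c b i = zlincomb c (mat2_map (fun f : {ffun I -> A} => f i) b).
Proof. by case: c b => [[[? ?] ?] ?] [[[? ?] ?] ?]; rewrite /= !ffunE !ffunMzE. Qed.

Lemma ring_span_zlincomb (A : pzRingType) (gens : seq A) c (b : mat2 A) :
  (forall a, a \in seq_of_mat2 b -> ring_span gens a) -> ring_span gens (zlincomb c b).
Proof.
case: c b => [[[? ?] ?] ?] [[[b0 b1] b2] b3] /= sb.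
by do !apply: ring_spanD; apply: ring_spanMz; apply: sb; rewrite !inE eqxx ?orbT.
Qed.

Definition unitsZ : mat2 (mat2 int) :=
  ((1, 0, 0, 0), (0, 1, 0, 0), (0, 0, 1, 0), (0, 0, 0, 1)).

Lemma zlincomb_units (M : 'M[int]_2) : zlincomb (entries2 M) (mat2_map (@mx2 _) unitsZ) = M.
Proof.
apply/matrixP => i j; rewrite /= -!scaler_int !mxE !intz.
by case: i => [[|[|i]] ?]; case: j => [[|[|j]] ?] //=;
  rewrite !(mulr0, mulr1, addr0, add0r); congr (M _ _); apply: val_inj.
Qed.

Definition bool_mat2 : seq (mat2 bool) :=
  let B := [:: false; true] in
  [seq (u, d) | u <- [seq (v, c) | v <- [seq (a, b) | a <- B, b <- B], c <- B], d <- B].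

Lemma mem_bool_mat2 u : u \in bool_mat2.
Proof. by case: u => [[[[] []] []] []]. Qed.

(* A pair of 0/1 matrices, given by their entries; it is read in M_2(Z) through [liftZ] and
   in M_2(F_2) through [mulF] and [addF], booleans standing for F_2. *)
Definition pattern := (mat2 bool * mat2 bool)%type.

Definition patterns : seq pattern := [seq (u, v) | u <- bool_mat2, v <- bool_mat2].

Lemma mem_patterns p : p \in patterns.
Proof. by case: p => u v; apply/allpairsP; exists (u, v); rewrite !mem_bool_mat2. Qed.

Definition mulF := mat2_mul addb andb.
Definition addF := mat2_add addb.
Definition oneF : mat2 bool := (true, false, false, true).

Definition mulZ := mat2_mul +%R ( *%R : int -> int -> int).
Definition addZ := mat2_add ( +%R : int -> int -> int).
Definition oneZ : mat2 int := (1, 0, 0, 1).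
Definition liftZ : mat2 bool -> mat2 int := mat2_map (fun b : bool => b%:R).
Definition lincombZ := mat2_lincomb addZ (fun z : int => mat2_map ( *%R z)).

Definition mx_bits (R : pzRingType) (u : mat2 bool) : 'M[R]_2 :=
  mx2 (mat2_map (fun b : bool => b%:R) u).

Lemma natr_addb_F2 (a b : bool) : ((a (+) b)%:R : 'F_2) = a%:R + b%:R.
Proof. by case: a; case: b; rewrite /= ?addr0 ?add0r //; apply/eqP. Qed.

Lemma natr_andb (R : pzSemiRingType) (a b : bool) : ((a && b)%:R : R) = a%:R * b%:R.
Proof. by case: a; case: b; rewrite /= ?mulr0 ?mulr1. Qed.

Lemma mx_bits_mulF u v : mx_bits 'F_2 (mulF u v) = mx_bits _ u * mx_bits _ v.
Proof. by rewrite /mx_bits (mat2_map_mul natr_addb_F2 (@natr_andb _)) mx2_mul. Qed.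

Lemma mx_bits_addF u v : mx_bits 'F_2 (addF u v) = mx_bits _ u + mx_bits _ v.
Proof. by rewrite /mx_bits (mat2_map_add natr_addb_F2) mx2_add. Qed.

Lemma mx_bits_oneF (R : pzRingType) : mx_bits R oneF = 1.
Proof. by rewrite -idmxE -mx2_scalar /mx_bits /= mulr1n mulr0n. Qed.

Lemma mx_bits_F2_inj : injective (mx_bits 'F_2).
Proof.
have natr_inj : injective (fun b : bool => (b%:R : 'F_2)).
  by case; case=> // /eqP; rewrite ?(eq_sym 0) oner_eq0.
move=> [[[a b] c] d] [[[a' b'] c'] d'] /mx2_inj [].
by move=> /natr_inj -> /natr_inj -> /natr_inj -> /natr_inj ->.
Qed.

Lemma F2_cases (c : 'F_2) : c = 0 \/ c = 1.
Proof. by case: c => [[|[|n]] ?]; [left|right|by []]; apply/val_inj. Qed.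

Definition bits (M : 'M[int]_2) : mat2 bool := mat2_map (fun z => z == 1) (entries2 M).

Lemma mx_bits_bits (M : 'M[int]_2) :
  (forall r c, M r c = 0 \/ M r c = 1) -> mx_bits int (bits M) = M.
Proof.
move=> M01; have bitK r c : ((M r c == 1) : nat)%:R = M r c by case: (M01 r c) => ->.
by rewrite -[RHS]mx2_entries /mx_bits /bits; apply: (congr1 (@mx2 int)); rewrite /= !bitK.
Qed.

Lemma reduce_mx_bits (u : mat2 bool) :
  map_mx (fun z : int => (z%:~R : 'F_2)) (mx_bits int u) = mx_bits 'F_2 u.
Proof.
rewrite /mx_bits map_mx2; apply: (congr1 (@mx2 'F_2)).
by case: u => [[[? ?] ?] ?]; rewrite /= !natz -!pmulrn.
Qed.

Lemma mx2_lincombZ c b : mx2 (lincombZ c b) = zlincomb c (mat2_map (@mx2 _) b).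
Proof.
by case: c b => [[[? ?] ?] ?] [[[? ?] ?] ?]; rewrite /lincombZ /= !mx2_add !mx2_scale.
Qed.

Inductive letter := lX | lY.
Definition word := seq letter.
Definition word_of (A : Type) (a b : A) (w : word) : seq A :=
  [seq if l is lX then a else b | l <- w].

Definition wordZ (p : pattern) (w : word) : mat2 int :=
  foldr mulZ oneZ (word_of (liftZ p.1) (liftZ p.2) w).
Definition commZ (u v : mat2 int) : mat2 int := addZ (mulZ u v) (mat2_map -%R (mulZ v u)).
Definition trace_invariant (p : pattern) (t : word * word * word * word) : int :=
  let: (a, b, c, d) := t in
  let m := mulZ (commZ (wordZ p a) (wordZ p b)) (commZ (wordZ p c) (wordZ p d)) in m.1.1.1 + m.2.

Lemma mx2_wordZ p w :
  mx2 (wordZ p w) = word_eval (word_of (mx_bits int p.1) (mx_bits int p.2) w).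
Proof.
rewrite /wordZ /word_eval; elim: w => [|l w IH] /=.
  by rewrite big_nil -idmxE -mx2_scalar.
by rewrite big_cons mx2_mul IH; case: l.
Qed.

Lemma mx2_commZ u v : mx2 (commZ u v) = mx2 u * mx2 v - mx2 v * mx2 u.
Proof. by rewrite /commZ mx2_add mx2_opp !mx2_mul. Qed.

Lemma trace_invariantE p a b c d :
  let W w := mx2 (wordZ p w) in
  trace_invariant p (a, b, c, d) = \tr ((W a * W b - W b * W a) * (W c * W d - W d * W c)).
Proof. by rewrite /= -!mx2_commZ -mx2_mul mx2_trace. Qed.

Definition basisF (p : pattern) : mat2 (mat2 bool) := (oneF, p.1, p.2, mulF p.1 p.2).
Definition span_mod2 (p : pattern) : seq (mat2 bool) :=
  [seq mat2_lincomb addF (fun c => mat2_map (andb c)) c (basisF p) | c <- bool_mat2].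
Definition spans_mod2 (p : pattern) : bool := all (mem (span_mod2 p)) bool_mat2.

(* By Cayley-Hamilton, span {1, X, Y, XY} is closed under left multiplication by X and Y. *)
Definition span_mod2_closed (p : pattern) : bool :=
  let S := span_mod2 p in
  (oneF \in S) &&
  all (fun v => [&& mulF p.1 v \in S, mulF p.2 v \in S & all (fun w => addF v w \in S) S]) S.

Definition generating_patterns : seq pattern := [seq p <- patterns | spans_mod2 p].

Definition invertible_pairs : seq (mat2 bool * mat2 bool) :=
  [seq gh <- [seq (g, h) | g <- bool_mat2, h <- bool_mat2]
     | (mulF gh.1 gh.2 == oneF) && (mulF gh.2 gh.1 == oneF)].

Definition conjugate (p q : pattern) : bool :=
  has (fun gh => (mulF (mulF gh.1 p.1) gh.2 == q.1) && (mulF (mulF gh.1 p.2) gh.2 == q.2))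
    invertible_pairs.

Definition basisZ (p : pattern) : mat2 (mat2 int) :=
  (oneZ, liftZ p.1, liftZ p.2, mulZ (liftZ p.1) (liftZ p.2)).

Definition mat2_of_seq (T : Type) (x0 : T) (s : seq T) : mat2 T :=
  (nth x0 s 0, nth x0 s 1, nth x0 s 2, nth x0 s 3).
Definition rem_nth (T : Type) (n : nat) (s : seq T) := take n s ++ drop n.+1 s.
Definition minor_seq (i j : nat) (m : seq (seq int)) := [seq rem_nth j r | r <- rem_nth i m].

Fixpoint det_seq (n : nat) (m : seq (seq int)) : int :=
  if n is n'.+1 then
    foldr +%R 0 [seq (-1) ^+ j * nth 0 (head [::] m) j * det_seq n' (minor_seq 0 j m)
                | j <- iota 0 n]
  else 1.

(* [det D * adj D], the inverse of [D] when [det D] is +-1.  Nothing is proved about this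
   computation: only its outcome is checked, in [unit_coords_correct]. *)
Definition inverse4 (D : mat2 (mat2 int)) : mat2 (mat2 int) :=
  let m := seq_of_mat2 (mat2_map (@seq_of_mat2 int) D) in
  let d := det_seq 4 m in
  mat2_of_seq (0, 0, 0, 0) [seq mat2_of_seq 0
    [seq d * (-1) ^+ (r + s) * det_seq 3 (minor_seq s r m) | s <- iota 0 4] | r <- iota 0 4].

Definition unit_coords (p : pattern) := inverse4 (basisZ p).

(* (a, b, c, d) stands for the central element [a,b][c,d] + [c,d][a,b] (see [comm_anticomm_mx2]);
   the list was found by a greedy search. *)
Definition separating_words : seq (word * word * word * word) :=
  [:: ([:: lX; lY], [:: lX; lY; lX], [:: lY; lX], [:: lY; lX; lY]);
      ([:: lX], [:: lX; lX; lY], [:: lY; lX], [:: lY; lX; lY]);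
      ([:: lY], [:: lX; lY; lY], [:: lY; lX], [:: lX; lY; lX]);
      ([:: lX], [:: lX; lY], [:: lY; lX], [:: lY; lX; lX]);
      ([:: lX; lY], [:: lX; lY; lY], [:: lY; lX], [:: lY; lX; lY]);
      ([:: lX], [:: lX; lY], [:: lY], [:: lY; lX]);
      ([:: lX], [:: lX; lY], [:: lX], [:: lX; lY; lX]);
      ([:: lX], [:: lX; lY], [:: lY], [:: lY; lY; lX]);
      ([:: lY], [:: lX; lY], [:: lY; lX], [:: lY; lY; lX])].

Definition separated (p q : pattern) : bool :=
  has (fun t => `|trace_invariant p t - trace_invariant q t| == 1) separating_words.

(* One pattern in each GL_2(F_2)-conjugacy class of generating patterns: the group, of order 6,
   acts freely on the 96 generating patterns. *)
Definition class_reps : seq pattern :=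
  foldr (fun p r => if has (conjugate p) r then r else p :: r) [::] generating_patterns.

Lemma span_mod2_closed_all : all span_mod2_closed patterns.
Proof. by vm_compute. Qed.

Lemma unit_coords_correct :
  all (fun p => mat2_map (fun c => lincombZ c (basisZ p)) (unit_coords p) == unitsZ)
    generating_patterns.
Proof. by vm_compute. Qed.

Lemma generating_patterns_separated :
  all (fun p => all (fun q => conjugate p q || separated p q) generating_patterns)
    generating_patterns.
Proof. by vm_compute. Qed.

Lemma class_reps_spec :
  [&& size class_reps == 16, all spans_mod2 class_reps & pairwise separated class_reps].
Proof. by vm_compute. Qed.

Lemma span_mod2_closedP p : let S := span_mod2 p in
  [/\ oneF \in S, {in S, forall v, mulF p.1 v \in S}, {in S, forall v, mulF p.2 v \in S}
     & {in S &, forall v w, addF v w \in S}].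
Proof.
have /andP [oneS /allP closedS] := allP span_mod2_closed_all p (mem_patterns p).
split=> // [v|v|v w] /closedS /and3P; [by case | by case |].
by case=> _ _ /allP; apply.
Qed.

Lemma unit_coordsP p :
  spans_mod2 p -> mat2_map (fun c => lincombZ c (basisZ p)) (unit_coords p) = unitsZ.
Proof.
move=> sp; apply/eqP; move/allP: unit_coords_correct; apply.
by rewrite mem_filter sp mem_patterns.
Qed.

Lemma conjugate_or_separated p q :
  spans_mod2 p -> spans_mod2 q -> conjugate p q || separated p q.
Proof.
move=> sp sq; have gp : p \in generating_patterns by rewrite mem_filter sp mem_patterns.
have gq : q \in generating_patterns by rewrite mem_filter sq mem_patterns.
exact: (allP (allP generating_patterns_separated p gp) q gq).
Qed.

Lemma separated_sym p q : separated p q = separated q p.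
Proof. by apply: eq_has => t; rewrite -normrN opprB. Qed.

Section GeneratedByPatterns.
Variables (k : nat) (x y : M2Zk k) (pat : 'I_k -> pattern).
Hypotheses (x_pat : forall i, x i = mx_bits int (pat i).1)
           (y_pat : forall i, y i = mx_bits int (pat i).2).
Hypothesis pat_spans : forall i, spans_mod2 (pat i).
Hypothesis pat_separated : forall i j, i != j -> separated (pat i) (pat j).

Local Notation S := (ring_span [:: x; y]).

Lemma ring_span_word_of w : S (word_eval (word_of x y w)).
Proof.
apply: ring_span_word; elim: w => [|l w IH] g //=.
by rewrite inE => /orP [/eqP ->|/IH //]; case: l; rewrite !inE eqxx ?orbT.
Qed.

Lemma word_of_component w i : word_eval (word_of x y w) i = mx2 (wordZ (pat i) w).
Proof.
rewrite ffun_word_eval mx2_wordZ -x_pat -y_pat /word_of -map_comp.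
by congr word_eval; apply: eq_map => -[].
Qed.

Lemma component_onto i (M : 'M[int]_2) : exists2 v, S v & v i = M.
Proof.
pose B : mat2 (M2Zk k) := (1, x, y, x * y).
have B_i : mat2_map (fun f : M2Zk k => f i) B = mat2_map (@mx2 _) (basisZ (pat i)).
  by rewrite /= !ffunE x_pat y_pat mx2_mul -idmxE -mx2_scalar.
have := unit_coordsP (pat_spans i).
case: (unit_coords (pat i)) => [[[c0 c1] c2] c3] [e0 e1 e2 e3].
have Sx : S x by apply: ring_span_gen; rewrite mem_head.
have Sy : S y by apply: ring_span_gen; rewrite !inE eqxx orbT.
have SB c : S (zlincomb c B).
  apply: ring_span_zlincomb => g; rewrite /= !inE => /or4P [] /eqP ->;
    [exact: ring_span1 | exact: Sx | exact: Sy | exact: ring_spanM].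
exists (zlincomb (entries2 M) (zlincomb c0 B, zlincomb c1 B, zlincomb c2 B, zlincomb c3 B)).
  by apply: ring_span_zlincomb => g; rewrite /= !inE => /or4P [] /eqP ->.
rewrite ffun_zlincomb /= !ffun_zlincomb B_i -!mx2_lincombZ e0 e1 e2 e3.
exact: zlincomb_units.
Qed.

Lemma components_separated i j : i != j -> exists2 v, S v & v i = 1 /\ v j = 0.
Proof.
move=> /pat_separated /(has_nthP ([::], [::], [::], [::])) [n _].
case: nth => [[[a b] c] d] /eqP sep.
have [sigma S_sigma sigma_l] : exists2 sigma, S sigma &
    forall l, sigma l = (trace_invariant (pat l) (a, b, c, d))%:M.
  exists (comm_anticomm (word_eval (word_of x y a)) (word_eval (word_of x y b))
                        (word_eval (word_of x y c)) (word_eval (word_of x y d))).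
    by apply: ring_span_comm_anticomm; apply: ring_span_word_of.
  by move=> l; rewrite comm_anticomm_ffunE !word_of_component comm_anticomm_mx2 trace_invariantE.
move: (sigma_l i) (sigma_l j) sep.
move: (trace_invariant (pat i) _) (trace_invariant (pat j) _) => si sj sigma_i sigma_j sep.
(* Since [si - sj] is +-1, this is [(si - sj)^2 = 1] in factor i and [0] in factor j. *)
exists ((si - sj)%:~R * (sigma - sj%:~R)).
  by apply: ring_spanM; [exact: ring_span_int | apply: ring_spanB; [|exact: ring_span_int]].
have int_mx (z : int) : (z%:~R : 'M[int]_2) = z%:M.
  by rewrite -(rmorph_int (@scalar_mx _ 2)) intz.
rewrite !ffunE !ffun_intr sigma_i sigma_j !int_mx -!raddfB /= -!mulmxE -!scalar_mxM.
rewrite subrr mulr0.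
split; last exact: raddf0.
by rewrite -expr2 -(real_normK (num_real _)) sep expr1n idmxE.
Qed.

Lemma ring_generates_of_patterns : ring_generates [:: x; y].
Proof.
exact: ffun_subsemiring_full (ring_span0 _) (ring_span1 _) (@ring_spanD _ _) (@ring_spanM _ _)
  component_onto components_separated.
Qed.

End GeneratedByPatterns.

Section ModTwoGeneration.
Variables (k : nat) (x y : M2Zk k).
Hypotheses (x01 : entries01 x) (y01 : entries01 y).
Hypothesis gen2 : F2alg_generates [:: red2 x; red2 y].

Let pat i : pattern := (bits (x i), bits (y i)).

Lemma x_bits i : x i = mx_bits int (pat i).1.
Proof. exact/esym/mx_bits_bits/x01. Qed.
Lemma y_bits i : y i = mx_bits int (pat i).2.
Proof. exact/esym/mx_bits_bits/y01. Qed.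

Lemma red2_bits i :
  red2 x i = mx_bits 'F_2 (pat i).1 /\ red2 y i = mx_bits 'F_2 (pat i).2.
Proof. by rewrite !ffunE {1}x_bits {1}y_bits !reduce_mx_bits. Qed.

Lemma component_spans_mod2 i : spans_mod2 (pat i).
Proof.
have [oneS mulXS mulYS addS] := span_mod2_closedP (pat i).
pose P (m : M2F2k k) := m i \in [seq mx_bits 'F_2 v | v <- span_mod2 (pat i)].
have P0 : P 0.
  rewrite /P ffunE; apply/mapP; exists (addF oneF oneF); first exact: addS.
  by rewrite /mx_bits /= mulr0n mx2_scalar raddf0.
have Pall : forall a, P a.
  apply: (F2alg_generates_ind gen2) => // [||c a|g a]; rewrite /P.
  - by rewrite ffunE -(mx_bits_oneF 'F_2) map_f.
  - move=> a b /mapP [v Sv av] /mapP [w Sw bw].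
    by rewrite ffunE av bw -mx_bits_addF map_f // addS.
  - by case: (F2_cases c) => ->; rewrite ?scale0r ?scale1r.
  rewrite ffunE => /predU1P [->|/predU1P [->|//]] /mapP [v Sv ->];
  by have [rx ry] := red2_bits i; rewrite ?rx ?ry -mx_bits_mulF map_f // ?mulXS ?mulYS.
apply/allP => q _; have := Pall [ffun=> mx_bits 'F_2 q].
by rewrite /P ffunE (mem_map mx_bits_F2_inj).
Qed.

Lemma conjugate_components i j : conjugate (pat i) (pat j) -> i = j.
Proof.
case/hasP=> -[g h]; rewrite mem_filter /= => /andP [/andP [/eqP gh /eqP hg] _].
case/andP=> /eqP conj_x /eqP conj_y.
apply: (F2alg_generates_no_twist gen2 (g := mx_bits 'F_2 g) (h := mx_bits 'F_2 h)).
- by rewrite -mx_bits_mulF gh mx_bits_oneF.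
- by rewrite -mx_bits_mulF hg mx_bits_oneF.
have [rxi ryi] := red2_bits i; have [rxj ryj] := red2_bits j.
move=> a /predU1P [->|/predU1P [->|//]].
  by rewrite rxi rxj -!mx_bits_mulF conj_x.
by rewrite ryi ryj -!mx_bits_mulF conj_y.
Qed.

Lemma ring_generates_of_mod2 : ring_generates [:: x; y].
Proof.
apply: (ring_generates_of_patterns x_bits y_bits component_spans_mod2) => i j ij.
have := conjugate_or_separated (component_spans_mod2 i) (component_spans_mod2 j).
by case: (boolP (conjugate _ _)) => [/conjugate_components/eqP|]; rewrite ?(negbTE ij).
Qed.

End ModTwoGeneration.

Definition rep_default : pattern := (oneF, oneF).

Definition x16 : M2Zk 16 :=
  [ffun i : 'I_16 => mx_bits int (nth rep_default class_reps i).1].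
Definition y16 : M2Zk 16 :=
  [ffun i : 'I_16 => mx_bits int (nth rep_default class_reps i).2].

Lemma ring_generates_16 : ring_generates [:: x16; y16].
Proof.
have /and3P [/eqP size_reps /allP reps_span /(pairwiseP rep_default) reps_sep] :=
  class_reps_spec.
have lt_reps (i : 'I_16) : (i < size class_reps)%N by rewrite size_reps.
apply: (ring_generates_of_patterns (pat := fun i : 'I_16 => nth rep_default class_reps i)).
- by move=> i; rewrite ffunE.
- by move=> i; rewrite ffunE.
- by move=> i; apply/reps_span/mem_nth/lt_reps.
move=> i j; rewrite neq_ltn => /orP [] ij; last rewrite separated_sym.
  exact: reps_sep (lt_reps i) (lt_reps j) ij.
exact: reps_sep (lt_reps j) (lt_reps i) ij.
Qed.

Theorem mainTheorem19 :
  (forall (k : nat) (x y : M2Zk k),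
      (1 <= k)%N ->
      entries01 x -> entries01 y ->
      F2alg_generates [:: red2 x; red2 y] ->
      ring_generates [:: x; y])
  /\ (exists x y : M2Zk 16, ring_generates [:: x; y]).
Proof.
split; first by move=> k x y _; exact: ring_generates_of_mod2.
by exists x16, y16; exact: ring_generates_16.
Qed.
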